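(* Let $(H,\leq,\ast)$ be a discrete $\omega$-dimensional poc-set, and let $\Sigma,\Xi$ be almost-equality classes in $H^\circ$. If $\Xi$ intersects the closure $\overline{\Sigma}$ of $\Sigma$ in $H^\circ$, then $\Xi\subseteq\overline{\Sigma}$.
   Context: Poc-set: poset with minimum $0$ and order-reversing involution $\ast$ with $h\le h^\ast\Rightarrow h=0$. Discrete: intervals between proper elements finite. Transverse: none of $h\le k,h^\ast\le k,h\le k^\ast,h^\ast\le k^\ast$; $\omega$-dimensional: no infinite transverse subset. Ultrafilter: $\alpha\subseteq H$ with exactly one of $h,h^\ast$ in $\alpha$ for each $h$, no $h,k\in\alpha$ with $h\le k^\ast$; $H^\circ$ the set of ultrafilters with the topology induced from $2^H$ (product topology). $\alpha,\beta$ are almost equal if $\alpha\smallsetminus\beta$ is finite. *)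

From Stdlib Require Import List.

Set Implicit Arguments.

Definition finite_set {T : Type} (A : T -> Prop) : Prop :=
  exists l : list T, forall x, A x -> In x l.

Record is_pocset (H : Type) (le : H -> H -> Prop) (zero : H) (star : H -> H)
  : Prop := {
  poc_refl    : forall h, le h h;
  poc_antisym : forall h k, le h k -> le k h -> h = k;
  poc_trans   : forall h k l, le h k -> le k l -> le h l;
  poc_min     : forall h, le zero h;
  poc_invol   : forall h, star (star h) = h;
  poc_rev     : forall h k, le h k -> le (star k) (star h);
  poc_nondeg  : forall h, le h (star h) -> h = zero
}.

Section Poc.
Variables (H : Type) (le : H -> H -> Prop) (zero : H) (star : H -> H).

Definition proper (h : H) : Prop := h <> zero /\ h <> star zero.

Definition discrete : Prop :=
  forall h k, proper h -> proper k -> finite_set (fun x => le h x /\ le x k).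

Definition transverse (h k : H) : Prop :=
  ~ le h k /\ ~ le (star h) k /\ ~ le h (star k) /\ ~ le (star h) (star k).

Definition transverse_set (S : H -> Prop) : Prop :=
  forall h k, S h -> S k -> h <> k -> transverse h k.

Definition omega_dimensional : Prop :=
  forall S : H -> Prop, transverse_set S -> finite_set S.

Definition ultrafilter (a : H -> Prop) : Prop :=
  (forall h, (a h /\ ~ a (star h)) \/ (~ a h /\ a (star h))) /\
  (forall h k, a h -> a k -> ~ le h (star k)).

Definition almost_equal (a b : H -> Prop) : Prop :=
  finite_set (fun h => a h /\ ~ b h).

Definition almost_eq_class (Sigma : (H -> Prop) -> Prop) : Prop :=
  exists a, ultrafilter a /\
    forall b, Sigma b <-> (ultrafilter b /\ almost_equal b a).

(* Product topology on 2^H (subsets of H): a set U of subsets is open iff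
   every point of U has a basic cylinder neighbourhood (determined by
   finitely many coordinates) contained in U. *)
Definition agree_on (F : H -> Prop) (a b : H -> Prop) : Prop :=
  forall h, F h -> (a h <-> b h).

Definition open2H (U : (H -> Prop) -> Prop) : Prop :=
  forall a, U a -> exists F, finite_set F /\
    forall b, agree_on F a b -> U b.

(* closure of Sigma (a subset of H°) in H° with the subspace topology:
   a in H° such that every open set of 2^H containing a meets Sigma. *)
Definition closure_in_Hcirc (Sigma : (H -> Prop) -> Prop) (a : H -> Prop)
  : Prop :=
  ultrafilter a /\
  forall U, open2H U -> U a -> exists s, Sigma s /\ U s.

End Poc.

From Stdlib Require Import List Classical Lia.
Import ListNotations.

(* It suffices to move a point x of the closure of Sigma to any ultrafilter y
   almost equal to x, one element at a time, without leaving the closure.  If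
   h is maximal in y \ x, then h* is minimal in x, and flipping x across h
   (adding everything above h, removing everything below h* ) stays in the
   closure: the approximants of x from Sigma can be flipped in the same way and
   remain almost equal to the base point a of Sigma, because a has only
   finitely many elements below h*.  This finiteness is where the hypotheses
   enter: the maximal elements of {k in a | k < h*} are pairwise transverse,
   hence finitely many; by discreteness every such k lies below one of them;
   and below each of them a has only finitely many elements, since an
   approximant of x omits it while differing from a in finitely many places. *)

Section FiniteSets.
Context {T : Type}.

Lemma finite_set_sub {A B : T -> Prop} :
  finite_set B -> (forall x, A x -> B x) -> finite_set A.
Proof. intros [l Hl] AB. exists l. auto. Qed.

Lemma finite_set_union {A B : T -> Prop} :
  finite_set A -> finite_set B -> finite_set (fun x => A x \/ B x).
Proof.
  intros [lA HA] [lB HB]. exists (lA ++ lB).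
  intros x [Ax|Bx]; apply in_or_app; auto.
Qed.

Lemma finite_set_single (a : T) : finite_set (fun x => x = a).
Proof. exists [a]. intros x ->. now left. Qed.

Lemma finite_set_bigunion {I : Type} {A : I -> Prop} {F : I -> T -> Prop} :
  finite_set A -> (forall i, A i -> finite_set (F i)) ->
  finite_set (fun x => exists i, A i /\ F i x).
Proof.
  intros [l Hl] HF.
  assert (Hlist : finite_set (fun x => exists i, In i l /\ A i /\ F i x)).
  { clear Hl. induction l as [|i l IH]; [exists nil; intros x [j [[] _]]|].
    assert (Fi : finite_set (fun x => A i /\ F i x)).
    { destruct (classic (A i)) as [Ai|NAi].
      - apply (finite_set_sub (HF i Ai)). now intros x [_ Fx].
      - exists nil. now intros x [Ai _]. }
    apply (finite_set_sub (finite_set_union Fi IH)).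
    intros x [j [[<-|Ij] Fjx]]; [now left | right; now exists j]. }
  apply (finite_set_sub Hlist). intros x [i [Ai Fix]]. exists i. auto.
Qed.

Lemma finite_set_strict_ind (P : (T -> Prop) -> Prop) :
  (forall A, finite_set A ->
     (forall B a, (forall x, B x -> A x) -> A a -> ~ B a -> P B) -> P A) ->
  forall A, finite_set A -> P A.
Proof.
  intros Hstep.
  assert (G : forall n l A, length l <= n -> (forall x, A x -> In x l) -> P A).
  { induction n as [|n IH]; intros l A Hlen HA;
      apply Hstep; [exists l; exact HA| |exists l; exact HA|];
      intros B a BA Aa Ba; pose proof (HA a Aa) as Ia.
    - destruct l; [destruct Ia | simpl in Hlen; lia].
    - destruct (in_split a l Ia) as [l1 [l2 ->]].
      apply (IH (l1 ++ l2)).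
      + rewrite length_app in *. simpl in Hlen. lia.
      + intros x Bx. pose proof (HA x (BA x Bx)) as Ix.
        apply in_app_iff in Ix as [I1|[->|I2]]; apply in_app_iff; tauto. }
  intros A [l Hl]. exact (G _ l A (le_n _) Hl).
Qed.

End FiniteSets.

Section PartialOrder.
Context {T : Type} (le : T -> T -> Prop).

Definition maximal_in (S : T -> Prop) (m : T) : Prop :=
  S m /\ forall w, S w -> le m w -> w = m.

Lemma finite_set_from_maximal {S : T -> Prop} :
  (forall k, S k -> exists m, maximal_in S m /\ le k m) ->
  finite_set (maximal_in S) ->
  (forall m, maximal_in S m -> finite_set (fun w => S w /\ le w m)) ->
  finite_set S.
Proof.
  intros Up FM FD. apply (finite_set_sub (finite_set_bigunion FM FD)).
  intros k Sk. destruct (Up k Sk) as [m [Mm Lkm]]. now exists m.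
Qed.

Hypotheses (le_refl : forall x, le x x)
  (le_antisym : forall x y, le x y -> le y x -> x = y)
  (le_trans : forall x y z, le x y -> le y z -> le x z).

Lemma finite_set_maximal_above {S : T -> Prop} {k : T} :
  finite_set (fun w => S w /\ le k w) -> S k ->
  exists m, maximal_in S m /\ le k m.
Proof.
  intros Fk Sk.
  enough (G : forall A, finite_set A -> forall k, S k ->
            (forall w, S w -> le k w -> A w) -> exists m, maximal_in S m /\ le k m)
    by exact (G _ Fk k Sk (fun w Sw Lw => conj Sw Lw)).
  refine (finite_set_strict_ind _ _). intros A _ IH k0 Sk0 HA.
  destruct (classic (exists w, S w /\ le k0 w /\ w <> k0)) as [[w [Sw [Lw Nw]]]|Max].
  - destruct (IH (fun v => S v /\ le w v) k0) with (k := w) as [m [Mm Lwm]].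
    + intros v [Sv Lv]. exact (HA v Sv (le_trans _ _ _ Lw Lv)).
    + exact (HA k0 Sk0 (le_refl k0)).
    + intros [_ L]. exact (Nw (le_antisym _ _ L Lw)).
    + exact Sw.
    + intros v Sv Lv. now split.
    + exists m. split; [exact Mm | exact (le_trans _ _ _ Lw Lwm)].
  - exists k0. split; [split; [exact Sk0|] | apply le_refl].
    intros w Sw Lw. apply NNPP. intro Nw. apply Max. now exists w.
Qed.

End PartialOrder.

Section PocSet.
Context {H : Type} {le : H -> H -> Prop} {zero : H} {star : H -> H}.
Hypothesis Hpoc : is_pocset le zero star.

Let le_trans {h k l} : le h k -> le k l -> le h l := poc_trans Hpoc h k l.
Let le_rev {h k} : le h k -> le (star k) (star h) := poc_rev Hpoc h k.
Let starK : forall h, star (star h) = h := poc_invol Hpoc.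

Lemma le_star_swap {h k} : le h (star k) -> le k (star h).
Proof. intro L. pose proof (le_rev L) as R. now rewrite starK in R. Qed.

Lemma star_le_swap {h k} : le (star h) k -> le (star k) h.
Proof. intro L. pose proof (le_rev L) as R. now rewrite starK in R. Qed.

Lemma star_le_star {h k} : le (star h) (star k) -> le k h.
Proof. intro L. pose proof (le_rev L) as R. now rewrite !starK in R. Qed.

Lemma ultrafilter_zeroN {a} : ultrafilter le star a -> ~ a zero.
Proof. intros Ua Z. exact (proj2 Ua _ _ Z Z (poc_min Hpoc _)). Qed.

Lemma ultrafilter_starN {a h} : ultrafilter le star a -> a h -> ~ a (star h).
Proof. intros Ua Ah. destruct (proj1 Ua h); tauto. Qed.

Lemma ultrafilter_star {a h} : ultrafilter le star a -> ~ a h -> a (star h).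
Proof. intros Ua Nh. destruct (proj1 Ua h); tauto. Qed.

Lemma ultrafilter_up {a h k} : ultrafilter le star a -> a h -> le h k -> a k.
Proof.
  intros Ua Ah L. apply NNPP. intro Nk.
  apply (proj2 Ua h (star k) Ah (ultrafilter_star Ua Nk)). now rewrite starK.
Qed.

Lemma ultrafilter_below_proper {a k g} : ultrafilter le star a ->
  a k -> le k g -> star g <> zero -> proper zero star k.
Proof.
  intros Ua Ak Lkg Ng. split; intros ->.
  - exact (ultrafilter_zeroN Ua Ak).
  - apply Ng, (poc_antisym Hpoc); [exact (star_le_swap Lkg) | apply (poc_min Hpoc)].
Qed.

Lemma ultrafilter_incl_iff {a b} : ultrafilter le star a -> ultrafilter le star b ->
  (forall m, b m -> a m) -> forall m, a m <-> b m.
Proof.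
  intros Ua Ub ba m. split; [|apply ba]. intro Am. apply NNPP. intro Nbm.
  exact (ultrafilter_starN Ua Am (ba _ (ultrafilter_star Ub Nbm))).
Qed.

Lemma finite_set_star {A : H -> Prop} :
  finite_set A -> finite_set (fun m => A (star m)).
Proof.
  intros [l Hl]. exists (map star l). intros m Am.
  rewrite <- (starK m). apply in_map. auto.
Qed.

Lemma almost_equal_sym {a b} : ultrafilter le star a -> ultrafilter le star b ->
  almost_equal a b -> almost_equal b a.
Proof.
  intros Ua Ub Eab. apply (finite_set_sub (finite_set_star Eab)).
  intros m [Bm Nam]. split; [exact (ultrafilter_star Ua Nam) | exact (ultrafilter_starN Ub Bm)].
Qed.

Lemma almost_equal_trans {a b c : H -> Prop} :
  almost_equal a b -> almost_equal b c -> almost_equal a c.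
Proof.
  intros Eab Ebc. apply (finite_set_sub (finite_set_union Eab Ebc)).
  intros m [Am Ncm]. destruct (classic (b m)); tauto.
Qed.

Definition flip_at (h : H) (s : H -> Prop) : H -> Prop :=
  fun m => le h m \/ (~ le m (star h) /\ s m).

Lemma ultrafilter_flip_at {h s} : h <> zero ->
  ultrafilter le star s -> ultrafilter le star (flip_at h s).
Proof.
  intros hN [Es Cs]. unfold flip_at.
  assert (Nhh : ~ le h (star h)) by (intro L; exact (hN (poc_nondeg Hpoc h L))).
  split.
  - intro m. destruct (classic (le h m)) as [Lhm|Nhm].
    + left. split; [now left|]. intros [L|[N _]].
      * exact (Nhh (le_trans Lhm (le_star_swap L))).
      * exact (N (le_rev Lhm)).
    + destruct (classic (le m (star h))) as [Lmh|Nmh].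
      * right. split; [tauto|]. left. exact (le_star_swap Lmh).
      * assert (~ le h (star m)) by (intro L; exact (Nmh (le_star_swap L))).
        assert (~ le (star m) (star h)) by (intro L; exact (Nhm (star_le_star L))).
        destruct (Es m); tauto.
  - intros m k [Hm|[Nm Sm]] [Hk|[Nk Sk]] L.
    + exact (Nhh (le_trans Hm (le_trans L (le_rev Hk)))).
    + exact (Nk (le_star_swap (le_trans Hm L))).
    + exact (Nm (le_trans L (le_rev Hk))).
    + exact (Cs m k Sm Sk L).
Qed.

Lemma flip_at_almost_equal {a s h} : ultrafilter le star a ->
  almost_equal s a -> finite_set (fun k => a k /\ le k (star h)) ->
  almost_equal (flip_at h s) a.
Proof.
  intros Ua Esa Fh.
  apply (finite_set_sub (finite_set_union Esa (finite_set_star Fh))).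
  intros m [[Lhm|[_ Sm]] Nam]; [right | left; now split].
  split; [exact (ultrafilter_star Ua Nam) | exact (le_rev Lhm)].
Qed.

Lemma star_minimal_of_maximal_diff {x y h} :
  ultrafilter le star x -> ultrafilter le star y ->
  maximal_in le (fun m => y m /\ ~ x m) h ->
  forall k, x k -> le k (star h) -> k = star h.
Proof.
  intros Ux Uy [[Yh _] Mh] k Xk Lk.
  assert (E : star k = h).
  { apply Mh; [split | exact (le_star_swap Lk)].
    - exact (ultrafilter_up Uy Yh (le_star_swap Lk)).
    - exact (ultrafilter_starN Ux Xk). }
  now rewrite <- E, starK.
Qed.

Lemma transverse_maximal_below {a g S} : ultrafilter le star a -> star g <> zero ->
  (forall k, S k -> a k /\ le k g) -> transverse_set le star (maximal_in le S).
Proof.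
  intros Ua Ng HS m1 m2 [S1 M1] [S2 M2] Ne.
  destruct (HS m1 S1) as [A1 L1], (HS m2 S2) as [A2 L2].
  repeat split; intro L.
  - exact (Ne (eq_sym (M1 m2 S2 L))).
  - apply Ng, (poc_nondeg Hpoc). rewrite starK.
    exact (le_trans (star_le_swap (le_trans L L2)) L1).
  - exact (proj2 Ua m1 m2 A1 A2 L).
  - exact (Ne (M2 m1 S1 (star_le_star L))).
Qed.

Lemma closure_in_Hcirc_iff Sigma x : closure_in_Hcirc le star Sigma x <->
  ultrafilter le star x /\
  forall l : list H, exists s, Sigma s /\ forall m, In m l -> (x m <-> s m).
Proof.
  split; intros [Ux Cl]; split; try exact Ux.
  - intro l. apply (Cl (fun b => forall m, In m l -> (x m <-> b m))); [|tauto].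
    intros b Hb. exists (fun m => In m l). split; [now exists l|].
    intros c Ag m Im. specialize (Hb m Im). specialize (Ag m Im). tauto.
  - intros U OU Ux'. destruct (OU x Ux') as [F [[l Hl] HU]].
    destruct (Cl l) as [s [Ss Hs]]. exists s. split; [exact Ss|].
    apply HU. intros m Fm. exact (Hs m (Hl m Fm)).
Qed.

Lemma closure_in_Hcirc_incl {Sigma x y} :
  closure_in_Hcirc le star Sigma x -> ultrafilter le star y ->
  (forall m, y m -> x m) -> closure_in_Hcirc le star Sigma y.
Proof.
  intros Cx Uy yx. apply closure_in_Hcirc_iff in Cx as [Ux Cl].
  pose proof (ultrafilter_incl_iff Ux Uy yx) as Exy.
  apply closure_in_Hcirc_iff. split; [exact Uy|].
  intro l. destruct (Cl l) as [s [Ss Hs]]. exists s. split; [exact Ss|].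
  intros m Im. specialize (Hs m Im). specialize (Exy m). tauto.
Qed.

Section AlmostEqualityClass.
Hypotheses (Hdisc : discrete le zero star) (Homega : omega_dimensional le star).
Context {Sigma : (H -> Prop) -> Prop} {a : H -> Prop}.
Hypotheses (Ua : ultrafilter le star a)
  (HSigma : forall b, Sigma b <-> (ultrafilter le star b /\ almost_equal b a)).

Let maximal_above {S : H -> Prop} {k : H} := @finite_set_maximal_above H le
  (poc_refl Hpoc) (poc_antisym Hpoc) (poc_trans Hpoc) S k.

Lemma closure_in_Hcirc_down_finite {x k} : closure_in_Hcirc le star Sigma x -> ~ x k ->
  finite_set (fun w => a w /\ le w k).
Proof.
  intros Cx Nxk. apply closure_in_Hcirc_iff in Cx as [_ Cl].
  destruct (Cl [k]) as [s [Ss Hs]]. apply HSigma in Ss as [Us Esa].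
  assert (Nsk : ~ s k) by (rewrite <- (Hs k (in_eq k nil)); exact Nxk).
  apply (finite_set_sub (almost_equal_sym Us Ua Esa)).
  intros w [Aw Lw]. split; [exact Aw|]. intro Sw. exact (Nsk (ultrafilter_up Us Sw Lw)).
Qed.

Lemma closure_in_Hcirc_below_star_finite {x h} : closure_in_Hcirc le star Sigma x ->
  h <> zero -> x (star h) -> (forall k, x k -> le k (star h) -> k = star h) ->
  finite_set (fun k => a k /\ le k (star h)).
Proof.
  intros Cx hN xh Min.
  assert (Ux : ultrafilter le star x) by exact (proj1 Cx).
  assert (hN' : star (star h) <> zero) by now rewrite starK.
  assert (h_proper : proper zero star (star h))
    by exact (ultrafilter_below_proper Ux xh (poc_refl Hpoc _) hN').
  set (B := fun k => a k /\ le k (star h) /\ k <> star h).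
  assert (FB : finite_set B).
  { apply (finite_set_from_maximal le).
    - intros k Bk. apply maximal_above; [|exact Bk].
      destruct Bk as [Ak [Lk _]].
      apply (finite_set_sub (Hdisc k (star h) (ultrafilter_below_proper Ua Ak Lk hN') h_proper)).
      intros w [[_ [Lw _]] Lkw]. now split.
    - apply Homega, (transverse_maximal_below Ua hN'). intros k [Ak [Lk _]]. now split.
    - intros m [[_ [Lm Nm]] _].
      assert (Nxm : ~ x m) by (intro Xm; exact (Nm (Min m Xm Lm))).
      apply (finite_set_sub (closure_in_Hcirc_down_finite Cx Nxm)).
      intros w [[Aw _] Lw]. now split. }
  apply (finite_set_sub (finite_set_union FB (finite_set_single (star h)))).
  intros k [Ak Lk]. destruct (classic (k = star h)); [right | left; unfold B]; tauto.
Qed.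

Lemma closure_in_Hcirc_flip_at {x h} : closure_in_Hcirc le star Sigma x ->
  h <> zero -> x (star h) -> (forall k, x k -> le k (star h) -> k = star h) ->
  closure_in_Hcirc le star Sigma (flip_at h x).
Proof.
  intros Cx hN xh Min.
  pose proof (closure_in_Hcirc_below_star_finite Cx hN xh Min) as Fh.
  apply closure_in_Hcirc_iff in Cx as [Ux Cl].
  apply closure_in_Hcirc_iff. split; [exact (ultrafilter_flip_at hN Ux)|].
  intro l. destruct (Cl l) as [s [Ss Hs]]. exists (flip_at h s). split.
  - apply HSigma in Ss as [Us Esa]. apply HSigma.
    split; [exact (ultrafilter_flip_at hN Us) | exact (flip_at_almost_equal Ua Esa Fh)].
  - intros m Im. specialize (Hs m Im). unfold flip_at. tauto.
Qed.

Lemma closure_in_Hcirc_almost_equal {x y} : closure_in_Hcirc le star Sigma x ->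
  ultrafilter le star y -> almost_equal y x -> closure_in_Hcirc le star Sigma y.
Proof.
  intros Cx Uy Eyx.
  enough (G : forall D, finite_set D -> forall x, closure_in_Hcirc le star Sigma x ->
            (forall m, y m -> ~ x m -> D m) -> closure_in_Hcirc le star Sigma y)
    by exact (G _ Eyx x Cx (fun m Ym Nxm => conj Ym Nxm)).
  refine (finite_set_strict_ind _ _). clear x Cx Eyx.
  intros D FD IH x Cx HD. pose proof (proj1 Cx) as Ux.
  destruct (classic (exists m, y m /\ ~ x m)) as [[m0 Dm0]|Incl].
  2:{ apply (closure_in_Hcirc_incl Cx Uy). intros m Ym.
      apply NNPP. intro Nxm. apply Incl. now exists m. }
  destruct (maximal_above (S := fun m => y m /\ ~ x m) (k := m0)) as [h [Mh _]];
    [apply (finite_set_sub FD); intros w [[Yw Nxw] _]; exact (HD w Yw Nxw) | exact Dm0 |].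
  pose proof (star_minimal_of_maximal_diff Ux Uy Mh) as Min.
  destruct Mh as [[Yh Nxh] _].
  assert (hN : h <> zero) by (intros ->; exact (ultrafilter_zeroN Uy Yh)).
  apply (IH (fun m => D m /\ m <> h) h (fun m Dm => proj1 Dm) (HD h Yh Nxh))
    with (x := flip_at h x).
  - intros [_ N]. exact (N eq_refl).
  - exact (closure_in_Hcirc_flip_at Cx hN (ultrafilter_star Ux Nxh) Min).
  - intros m Ym Nfm. split.
    + apply (HD m Ym). intro Xm. apply Nfm. right. split; [|exact Xm].
      intro Lm. rewrite (Min m Xm Lm) in Ym. exact (ultrafilter_starN Uy Yh Ym).
    + intros ->. apply Nfm. left. apply (poc_refl Hpoc).
Qed.

End AlmostEqualityClass.
End PocSet.

Theorem mainTheorem20 (H : Type) (le : H -> H -> Prop) (zero : H)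
  (star : H -> H)
  (Hpoc : is_pocset le zero star)
  (Hdisc : discrete le zero star)
  (Homega : omega_dimensional le star)
  (Sigma Xi : (H -> Prop) -> Prop)
  (HSigma : almost_eq_class le star Sigma)
  (HXi : almost_eq_class le star Xi)
  (Hmeet : exists x, Xi x /\ closure_in_Hcirc le star Sigma x) :
  forall x, Xi x -> closure_in_Hcirc le star Sigma x.
Proof.
  intros y Xy.
  destruct HSigma as [a [Ua HS]], HXi as [b [Ub HX]], Hmeet as [x [Xx Cx]].
  apply HX in Xy as [Uy Eyb]. apply HX in Xx as [Ux Exb].
  apply (closure_in_Hcirc_almost_equal Hpoc Hdisc Homega Ua HS Cx Uy).
  exact (almost_equal_trans Eyb (almost_equal_sym Hpoc Ux Ub Exb)).
Qed.
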